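(* Consider the flat DAgger algorithm with a halving learner described in the context, learning over the full policy class $\Pi_{\mathrm{FULL}}=\{(\mu,\{\pi_g\}_{g\in\mathcal{G}}):\ \mu\in\mathcal{M},\ \pi_g\in\Pi_{\mathrm{LO}}\}$, where $\mathcal{M}$ and $\Pi_{\mathrm{LO}}$ are finite, and suppose the expert policy is realizable, i.e. $(\mu^\star,\{\pi^\star_g\}_{g\in\mathcal{G}})\in\Pi_{\mathrm{FULL}}$. Then the total cost incurred by the expert in flat DAgger by round $T$ is at most $$T\,C^{I}_{\mathrm{FULL}} + \bigl(\log_2|\mathcal{M}| + |\mathcal{G}|\log_2|\Pi_{\mathrm{LO}}|\bigr)\,C^{L}_{\mathrm{FULL}}.$$
   Context: Setting. There is a state space $\mathcal{S}$, an action space $\mathcal{A}$ and a finite set of subgoals $\mathcal{G}$. A hierarchical policy consists of a meta-controller $\mu:\mathcal{S}\to\mathcal{G}$ and, for each $g\in\mathcal{G}$, a subpolicy $\pi_g$ mapping a state to an action together with a termination signal $\omega\in\{0,1\}$. An episode starts at a start state $s$; repeatedly $g=\mu(s)$ is chosen and $\pi_g$ is rolled out from $s$ until it signals termination, after which $s$ is the last state reached; the concatenation of these low-level trajectories is the full trajectory $\tau_{\mathrm{FULL}}$. The expert has a hierarchical policy $(\mu^\star,\{\pi^\star_g\}_{g\in\mathcal{G}})$. $\mathcal{M}$ is a finite class of meta-controllers and $\Pi_{\mathrm{LO}}$ a finite class of subpolicies; the flat learner treats elements of $\Pi_{\mathrm{FULL}}$ as monolithic policies and is otherwise oblivious to the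 hierarchical structure. Expert operations and costs (per invocation): $\mathrm{Inspect}_{\mathrm{FULL}}(\tau_{\mathrm{FULL}})$ returns Pass/Fail according to whether the overall task was accomplished, cost $C^{I}_{\mathrm{FULL}}$; $\mathrm{Label}_{\mathrm{FULL}}(\tau_{\mathrm{FULL}})$ returns the expert's labels (the expert's high-level and low-level decisions) on every state of the full trajectory, cost $C^{L}_{\mathrm{FULL}}$. The expert is consistent: an episode on which the executed policy agrees with the expert policy at every visited state passes $\mathrm{Inspect}_{\mathrm{FULL}}$. Learner. The halving algorithm over $\Pi_{\mathrm{FULL}}$ maintains a version space (initially $\Pi_{\mathrm{FULL}}$), acts by majority vote of the version space, and upon receiving labeled data removes all policies inconsistent with the labels. Flat DAgger (modified version). In each round $t=1,\dots,T$: obtain a new environment instance, execute the current policy to obtain $\tau_{\mathrm{FULL}}$, and call $\mathrm{Inspect}_{\mathrm{FULL}}(\tau_{\mathrm{FULL}})$; only if it returns Fail, call $\mathrm{Label}_{\mathrm{FULL}}(\tau_{\mathrm{FULL}})$ and add the labels to the data; then update the halving learner. The total expert cost is the sum of costs of all operations invoked. *)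

From mathcomp Require Import all_boot.
From Stdlib Require Import Reals.

Set Implicit Arguments.
Unset Strict Implicit.
Unset Printing Implicit Defensive.

(* One step record of the full trajectory: (state, current subgoal, (action, termination)). *)
Definition step_rec (S A G : Type) := (S * G * (A * bool))%type.

(* An environment instance: start state, (possibly time-dependent) transition
   function, episode length (number of primitive steps), and the expert's
   Inspect_FULL test (Pass = true) on full trajectories. *)
Record env (S A G : Type) := Env {
  env_start : S;
  env_step : nat -> S -> A -> S;
  env_horizon : nat;
  env_inspect : seq (step_rec S A G) -> bool }.

Fixpoint rollout_from (S A G : Type) (step : nat -> S -> A -> S) (mu : S -> G)
    (pi : G -> S -> A * bool) (fuel t : nat) (s : S) (cur : option G)
    : seq (step_rec S A G) :=
  match fuel with
  | 0 => [::]
  | n.+1 =>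
      let g := if cur is Some g' then g' else mu s in
      let d := pi g s in
      (s, g, d) :: rollout_from step mu pi n t.+1 (step t s d.1)
                     (if d.2 then None else Some g)
  end.

Definition rollout (S A G : Type) (e : env S A G) (mu : S -> G)
    (pi : G -> S -> A * bool) : seq (step_rec S A G) :=
  rollout_from (env_step e) mu pi (env_horizon e) 0 (env_start e) None.

Definition agrees (S : Type) (A : eqType) (G : finType) (mu mu' : S -> G)
    (pi pi' : G -> S -> A * bool) (tau : seq (step_rec S A G)) : bool :=
  all (fun r : step_rec S A G =>
         (mu r.1.1 == mu' r.1.1) && (pi r.1.2 r.1.1 == pi' r.1.2 r.1.1)) tau.

(* Indices of the full class Pi_FULL = M x (Pi_LO)^G. *)
Definition hpol (G MC LO : finType) := (MC * {ffun G -> LO})%type.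

Section Halving.
Variables (S : Type) (A : eqType) (G MC LO : finType).
Variables (mc : MC -> S -> G) (lo : LO -> S -> A * bool).

Definition hmu (h : hpol G MC LO) : S -> G := mc h.1.
Definition hpi (h : hpol G MC LO) : G -> S -> A * bool := fun g => lo (h.2 g).

(* Majority (plurality) vote of the version space V; h0 is only a default for
   the arg max (tie-breaking is by enumeration order). *)
Definition hi_vote (h0 : hpol G MC LO) (V : {set hpol G MC LO}) (s : S) : G :=
  hmu [arg max_(h > h0 in V) #|[set h' in V | hmu h' s == hmu h s]| ] s.

Definition lo_vote (h0 : hpol G MC LO) (V : {set hpol G MC LO}) (g : G) (s : S)
    : A * bool :=
  hpi [arg max_(h > h0 in V) #|[set h' in V | hpi h' g s == hpi h g s]| ] g s.

Variables (envs : nat -> env S A G) (hstar h0 : hpol G MC LO).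

(* Version space before round t+1 (rounds indexed from 0). *)
Fixpoint version_space (t : nat) : {set hpol G MC LO} :=
  match t with
  | 0 => setT
  | t'.+1 =>
      let V := version_space t' in
      let tau := rollout (envs t') (hi_vote h0 V) (lo_vote h0 V) in
      if env_inspect (envs t') tau then V
      else [set h in V | agrees (hmu h) (hmu hstar) (hpi h) (hpi hstar) tau]
  end.

Definition round_traj (t : nat) : seq (step_rec S A G) :=
  rollout (envs t) (hi_vote h0 (version_space t)) (lo_vote h0 (version_space t)).

Definition round_pass (t : nat) : bool := env_inspect (envs t) (round_traj t).

Fixpoint dagger_cost (CI CL : R) (T : nat) : R :=
  match T with
  | 0 => 0%R
  | t.+1 => (dagger_cost CI CL t + CI + (if round_pass t then 0 else CL))%R
  end.

End Halving.

Definition log2 (x : R) : R := (ln x / ln 2)%R.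

(** The version space always contains the expert, so it never becomes empty.
    Every failed round exhibits a state where the majority vote differs from
    the expert (otherwise the run agrees with the expert and, by consistency,
    passes); relabelling that state removes every policy that sides with the
    majority, and by the plurality rule those are at least half of the version
    space.  Hence after [k] failed rounds [2^k <= |Pi_FULL| = |M| |Pi_LO|^|G|],
    i.e. [k <= log2 |M| + |G| log2 |Pi_LO|]; each round costs one inspection
    and each failed round one labelling. *)

From Stdlib Require Import Reals Lra.
From mathcomp Require Import all_boot.

Set Implicit Arguments.
Unset Strict Implicit.
Unset Printing Implicit Defensive.

(* Unlike [arg_maxnP], the default [i0] need not satisfy [P]. *)
Lemma arg_max_nonempty (I : finType) (i0 i1 : I) (P : pred I) (F : I -> nat) :
  P i1 -> extremum_spec geq P F [arg max_(i > i0 | P i) F i].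
Proof.
move=> P_i1; rewrite /arg_max /extremum.
case: pickP => [i /andP[P_i /'forall_implyP max_i] | no_max].
  by split=> // j; apply/implyP/max_i.
case: (arg_maxnP F P_i1) => i P_i max_i.
have := no_max i; rewrite /= P_i => /negbT/negP[].
exact/'forall_implyP.
Qed.

Lemma plurality_dissent_half (I : finType) (K : eqType) (k : I -> K)
    (i0 : I) (V : {set I}) (x : K) :
  k [arg max_(i > i0 in V) #|[set j in V | k j == k i]|] != x ->
  (#|[set j in V | k j == x]|.*2 <= #|V|)%N.
Proof.
set w := arg_max _ _ _ => w_neq_x.
have [-> | [i1]] := set_0Vmem [set j in V | k j == x]; first by rewrite cards0.
rewrite inE => /andP[V_i1 /eqP k_i1].
set B := [set j | k j == k w].
have dissent_sub : [set j in V | k j == x] \subset V :\: B.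
  apply/subsetP => j; rewrite !inE => /andP[-> /eqP ->].
  by rewrite eq_sym w_neq_x.
have support_eq : [set j in V | k j == k w] = V :&: B.
  by apply/setP => j; rewrite !inE.
have dissent_le_support : (#|[set j in V | k j == x]| <= #|V :&: B|)%N.
  rewrite -support_eq /w; case: (arg_max_nonempty i0 _ V_i1) => i _ max_i.
  by rewrite -k_i1; apply: max_i.
rewrite -addnn -(cardsID B V) addnC.
exact: leq_add (subset_leq_card dissent_sub) dissent_le_support.
Qed.

Lemma all_counterexample (T : Type) (q : pred T) (s : seq T) :
  ~~ all q s -> exists2 r, ~~ q r & forall p : pred T, all p s -> p r.
Proof.
elim: s => [|x s IHs] //=; rewrite negb_and => /orP[q'x | /IHs[r q'r all_r]].
  by exists x => // p /andP[].
by exists r => // p /andP[_ /all_r].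
Qed.

Section VersionSpace.

Variables (S : Type) (A : eqType) (G MC LO : finType).
Variables (mc : MC -> S -> G) (lo : LO -> S -> A * bool).
Variables (envs : nat -> env S A G) (hstar h0 : hpol G MC LO).

Hypothesis expert_consistent :
  forall (t : nat) (mu : S -> G) (pi : G -> S -> A * bool),
    agrees mu (hmu mc hstar) pi (hpi lo hstar) (rollout (envs t) mu pi) ->
    env_inspect (envs t) (rollout (envs t) mu pi).

Local Notation V := (version_space mc lo envs hstar h0).
Local Notation round_pass := (round_pass mc lo envs hstar h0).

Definition failed_rounds (T : nat) : nat := \sum_(t < T) ~~ round_pass t.

Lemma expert_in_version_space t : hstar \in V t.
Proof.
elim: t => [|t IHt] /=; first by rewrite inE.
case: ifP => _ //; rewrite inE IHt /=.
by elim: (rollout _ _ _) => //= r tau ->; rewrite !eqxx.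
Qed.

Lemma version_space_shrinks t : V t.+1 \subset V t.
Proof. by rewrite /=; case: ifP => _ //; apply/subsetP => h; rewrite inE => /andP[]. Qed.

Lemma version_space_halves t : ~~ round_pass t -> (#|V t.+1|.*2 <= #|V t|)%N.
Proof.
rewrite /round_pass /round_traj => failed /=; rewrite (negbTE failed).
set tau := rollout _ _ _.
have : ~~ agrees (hi_vote mc h0 (V t)) (hmu mc hstar) (lo_vote lo h0 (V t))
                 (hpi lo hstar) tau by apply: contra failed; apply: expert_consistent.
case/all_counterexample => r; rewrite negb_and => /orP[] vote_wrong all_r.
- apply: leq_trans (plurality_dissent_half (k := fun h => hmu mc h r.1.1) vote_wrong).
  rewrite leq_double; apply/subset_leq_card/subsetP => h.
  by rewrite !inE => /andP[-> /all_r /andP[]].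
- apply: leq_trans (plurality_dissent_half (k := fun h => hpi lo h r.1.2 r.1.1) vote_wrong).
  rewrite leq_double; apply/subset_leq_card/subsetP => h.
  by rewrite !inE => /andP[-> /all_r /andP[]].
Qed.

Lemma version_space_round t : (2 ^ (~~ round_pass t) * #|V t.+1| <= #|V t|)%N.
Proof.
case: (boolP (round_pass t)) => [_ | failed].
  by rewrite mul1n subset_leq_card ?version_space_shrinks.
by rewrite mul2n version_space_halves.
Qed.

Lemma pow2_failed_rounds_le T :
  (2 ^ failed_rounds T * #|V T| <= #|MC| * #|LO| ^ #|G|)%N.
Proof.
elim: T => [|t IHt].
  by rewrite /failed_rounds big_ord0 /= mul1n cardsT card_prod card_ffun.
apply: leq_trans IHt; rewrite /failed_rounds big_ord_recr expnD -mulnA leq_mul2l.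
by rewrite version_space_round orbT.
Qed.

Lemma pow2_failed_rounds_le_card_policies T :
  (2 ^ failed_rounds T <= #|MC| * #|LO| ^ #|G|)%N.
Proof.
apply: leq_trans (pow2_failed_rounds_le T); rewrite leq_pmulr //.
by apply/card_gt0P; exists hstar; apply: expert_in_version_space.
Qed.

End VersionSpace.

Open Scope R_scope.

Lemma dagger_cost_failed_rounds (S : Type) (A : eqType) (G MC LO : finType)
    (mc : MC -> S -> G) (lo : LO -> S -> A * bool) (envs : nat -> env S A G)
    (hstar h0 : hpol G MC LO) (CI CL : R) (T : nat) :
  dagger_cost mc lo envs hstar h0 CI CL T
  = INR T * CI + INR (failed_rounds mc lo envs hstar h0 T) * CL.
Proof.
elim: T => [|t IHt]; first by rewrite /failed_rounds big_ord0 /=; ring.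
rewrite S_INR /= IHt /failed_rounds big_ord_recr plus_INR.
by case: round_pass => /=; ring.
Qed.

Lemma INR_expn (m n : nat) : INR (m ^ n)%N = INR m ^ n.
Proof. by elim: n => [|n IHn]; rewrite ?expn0 // expnS mult_INR IHn. Qed.

Lemma ln_le (x y : R) : 0 < x -> x <= y -> ln x <= ln y.
Proof.
move=> x_gt0 /Rle_lt_or_eq_dec[x_lt_y | ->]; last exact: Rle_refl.
by left; apply: ln_increasing.
Qed.

Lemma le_log2_of_pow2_le (n a b g : nat) :
  (2 ^ n <= a * b ^ g)%N -> INR n <= log2 (INR a) + INR g * log2 (INR b).
Proof.
move=> pow2_le.
have ln2_gt0 : 0 < ln 2 by have := ln_lt_2; lra.
have : (0 < a * b ^ g)%N by apply: leq_trans pow2_le; rewrite expn_gt0.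
rewrite muln_gt0 => /andP[a_gt0 bg_gt0].
have ln_bg : ln (INR b ^ g) = INR g * ln (INR b).
  move: bg_gt0; rewrite expn_gt0 => /orP[b_gt0 | /eqP ->].
    by rewrite ln_pow //; apply/lt_0_INR/ltP.
  by rewrite /= ln_1; ring.
have le_R : 2 ^ n <= INR a * INR b ^ g.
  have INR2 : INR 2 = 2 by rewrite /=; lra.
  by rewrite -INR2 -!INR_expn -mult_INR; apply/le_INR/leP.
have a_R_gt0 : 0 < INR a by apply/lt_0_INR/ltP.
have bg_R_gt0 : 0 < INR b ^ g by rewrite -INR_expn; apply/lt_0_INR/ltP.
have := ln_le (pow_lt 2 n Rlt_0_2) le_R.
rewrite ln_pow ?ln_mult ?ln_bg //; last exact: Rlt_0_2.
move=> ln_le_sum; apply: (Rmult_le_reg_r (ln 2)) => //.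
rewrite /log2; field_simplify; lra.
Qed.

Theorem theorem2 (S : Type) (A : eqType) (G MC LO : finType)
  (mc : MC -> S -> G) (lo : LO -> S -> A * bool)
  (Hmc : injective mc) (Hlo : injective lo)
  (envs : nat -> env S A G) (hstar h0 : hpol G MC LO) (CI CL : R) (T : nat) :
  (0 <= CI)%R -> (0 <= CL)%R ->
  (forall (t : nat) (mu : S -> G) (pi : G -> S -> A * bool),
      agrees mu (hmu mc hstar) pi (hpi lo hstar) (rollout (envs t) mu pi) ->
      env_inspect (envs t) (rollout (envs t) mu pi)) ->
  (dagger_cost mc lo envs hstar h0 CI CL T
     <= INR T * CI
        + (log2 (INR #|MC|) + INR #|G| * log2 (INR #|LO|)) * CL)%R.
Proof.
move=> _ CL_ge0 expert_consistent.
rewrite dagger_cost_failed_rounds; apply/Rplus_le_compat_l/Rmult_le_compat_r => //.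
exact/le_log2_of_pow2_le/pow2_failed_rounds_le_card_policies.
Qed.
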